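(* Let $\mathcal{A}$ be an algorithm that takes a (static, non-temporal) graph $G'$ on $n'$ vertices as input and computes an $(\alpha,\beta)$-spanner of $G'$ of size $O(f(n'))$. Then, for any temporal graph $G$ on $n$ vertices with lifetime $L$, one can use $\mathcal{A}$ to build a temporal $(\alpha,L\beta)$-spanner $H$ of $G$ of size $O(L\cdot f(n))$.
   Context: For a static undirected graph $G'$, an $(\alpha,\beta)$-spanner is a subgraph $H'$ with $V(H')=V(G')$ and $d_{H'}(u,v)\le\alpha\, d_{G'}(u,v)+\beta$ for all $u,v$, where $d$ denotes shortest-path distance (number of edges). A temporal graph is an undirected graph $G=(V,E)$ with a labeling $\lambda:E\to\mathbb{N}^+$; its lifetime $L$ is the number of distinct labels used. A temporal path is a path whose traversed edges have non-decreasing labels in the order of traversal; its length is its number of edges, and $d_G(u,v)$ is the minimum length of a temporal path from $u$ to $v$ in $G$ ($+\infty$ if none). A temporal $(\alpha,\beta)$-spanner of $G$ is a subgraph $H$ with $V(H)=V$, $E(H)\subseteq E$ (same labels), such that $d_H(u,v)\le\alpha\, d_G(u,v)+\beta$ for all $u,v\in V$. Size means number of edges. *)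

From HB Require Import structures.
From mathcomp Require Import all_boot all_order all_algebra.
Set Implicit Arguments. Unset Strict Implicit. Unset Printing Implicit Defensive.
Import Order.TTheory GRing.Theory Num.Theory.

Definition is_graph (V : finType) (E : {set {set V}}) : Prop :=
  forall e, e \in E -> #|e| = 2.

Definition adj (V : finType) (E : {set {set V}}) : rel V :=
  fun x y => [set x; y] \in E.

(* s is a walk in E from u to v; its length (number of edges) is size s
   (the walk visits u :: s). *)
Definition walk (V : finType) (E : {set {set V}}) (u v : V) (s : seq V) : Prop :=
  path (adj E) u s /\ last u s = v.

(* Static (alpha,beta)-spanner: H subgraph of E and
   d_H(u,v) <= alpha d_E(u,v) + beta, unfolded over walks (d = +oo if none). *)
Definition spanner (R : realFieldType) (alpha beta : R) (V : finType)
  (E H : {set {set V}}) : Prop :=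
  H \subset E /\
  forall (u v : V) (s : seq V), walk E u v s ->
    exists s' : seq V, walk H u v s' /\
      ((size s')%:R <= alpha * (size s)%:R + beta)%R.

Definition wedges (V : finType) (u : V) (s : seq V) : seq {set V} :=
  pairmap (fun x y => [set x; y]) u s.

Definition twalk (V : finType) (E : {set {set V}}) (lam : {set V} -> nat)
  (u v : V) (s : seq V) : Prop :=
  all (fun e => e \in E) (wedges u s) /\
  sorted leq (map lam (wedges u s)) /\ last u s = v.

Definition lifetime (V : finType) (E : {set {set V}}) (lam : {set V} -> nat) : nat :=
  size (undup [seq lam e | e <- enum E]).

Definition tspanner (R : realFieldType) (alpha beta : R) (V : finType)
  (E : {set {set V}}) (lam : {set V} -> nat) (H : {set {set V}}) : Prop :=
  H \subset E /\
  forall (u v : V) (s : seq V), twalk E lam u v s ->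
    exists s' : seq V, twalk H lam u v s' /\
      ((size s')%:R <= alpha * (size s)%:R + beta)%R.

From HB Require Import structures.
From mathcomp Require Import all_boot all_order all_algebra.
From mathcomp Require Import lra.
Import Order.TTheory GRing.Theory Num.Theory.
Set Implicit Arguments. Unset Strict Implicit. Unset Printing Implicit Defensive.

(* Let H be the union, over the L labels k, of an (alpha, beta)-spanner
   of the static graph G_k of the edges labelled k.  A temporal walk splits into
   at most L maximal segments of constant label; the segment of label k is a
   walk of G_k, which the spanner of G_k replaces by a walk of the same label of
   length at most alpha times its length plus beta.  The concatenation is again
   temporal and has length at most alpha |s| + L beta. *)

Lemma count_gt_succ (ls : seq nat) (k j : nat) : uniq ls -> j \in ls -> k < j ->
  (count (fun i => j < i) ls).+1 <= count (fun i => k < i) ls.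
Proof.
move=> uniq_ls j_ls lt_kj.
have disj : count (predI (fun i => j < i) (pred1 j)) ls = 0.
  apply/eqP; rewrite eqn0Ngt -has_count.
  by apply/hasP => -[i _ /andP[lt_ji /eqP eq_ij]]; rewrite eq_ij ltnn in lt_ji.
have one_j : count (pred1 j) ls = 1 by rewrite count_uniq_mem ?j_ls.
have := count_predUI (fun i => j < i) (pred1 j) ls.
rewrite disj one_j addn0 addn1 => <-.
by apply: sub_count => i /= /orP[/(ltn_trans lt_kj) | /eqP->].
Qed.

Lemma count_gt_lt_size (ls : seq nat) (k : nat) : k \in ls ->
  (count (fun i => k < i) ls).+1 <= size ls.
Proof.
move=> k_ls; rewrite -(count_predC (fun i => k < i) ls) -addn1 leq_add2l.
by rewrite -has_count; apply/hasP; exists k; rewrite //= ltnn.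
Qed.

Lemma path_leq_const_cat (k : nat) (l r : seq nat) :
  all (pred1 k) l -> path leq k r -> path leq k (l ++ r).
Proof. by elim: l => //= i l IH /andP[/eqP-> /IH]; rewrite leqnn. Qed.

Section Walks.
Variable V : finType.
Implicit Types (X Y : {set {set V}}) (lam : {set V} -> nat) (u v w x : V) (s p : seq V).

Definition label_edges X lam (k : nat) : {set {set V}} := [set e in X | lam e == k].

Lemma label_edges_sub X lam k : label_edges X lam k \subset X.
Proof. by apply/subsetP => e; rewrite inE => /andP[]. Qed.

Definition labels X lam : seq nat := undup [seq lam e | e <- enum X].

Lemma labels_uniq X lam : uniq (labels X lam).
Proof. exact: undup_uniq. Qed.

Lemma mem_labels X lam e : e \in X -> lam e \in labels X lam.
Proof. by move=> eX; rewrite mem_undup map_f ?mem_enum. Qed.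

Lemma path_adj_wedges X w s : path (adj X) w s -> all [in X] (wedges w s).
Proof. by elim: s w => //= x s IH w /andP[adj_wx /IH ->]; rewrite andbT. Qed.

Lemma sub_walk X Y u v s : X \subset Y -> walk X u v s -> walk Y u v s.
Proof. by move=> /subsetP sXY [p_s last_s]; split=> //; apply: sub_path p_s => x y /sXY. Qed.

Lemma walk_rcons X w u x p :
  walk X w u p -> [set u; x] \in X -> walk X w x (rcons p x).
Proof. by move=> [p_p <-] e_X; split; rewrite ?last_rcons // rcons_path p_p. Qed.

Definition twalk_after X lam (k : nat) u v s : Prop :=
  [/\ all [in X] (wedges u s), path leq k (map lam (wedges u s)) & last u s = v].

Lemma twalk_after_cons X lam k u v x s :
  twalk_after X lam k u v (x :: s) <->
  [/\ [set u; x] \in X, k <= lam [set u; x] & twalk_after X lam (lam [set u; x]) x v s].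
Proof.
rewrite /twalk_after /=; split; first by move=> [/andP[-> ?] /andP[-> ?] ?].
by move=> [-> -> [-> -> ->]].
Qed.

Lemma twalk_afterW X lam j k u v s :
  k <= j -> twalk_after X lam j u v s -> twalk_after X lam k u v s.
Proof. by move=> le_kj [? p_s ?]; split=> //; apply: path_le le_kj p_s; apply: leq_trans. Qed.

Lemma twalk_after_twalk X lam k u v s : twalk_after X lam k u v s -> twalk X lam u v s.
Proof. by move=> [? /path_sorted ? ?]. Qed.

Lemma twalk_after_first X lam u v x s :
  twalk X lam u v (x :: s) -> twalk_after X lam (lam [set u; x]) u v (x :: s).
Proof. by move=> [? [sorted_s ?]]; split; rewrite //= leqnn. Qed.

Lemma label_walk_cat X lam k w u v p s :
  walk (label_edges X lam k) w u p -> twalk_after X lam k u v s ->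
  twalk_after X lam k w v (p ++ s).
Proof.
move=> [p_p last_p] [X_s p_s last_s].
have /allP in_label := path_adj_wedges p_p.
have X_p : all [in X] (wedges w p).
  by apply/allP => e /in_label; rewrite inE => /andP[].
have lam_p : all (pred1 k) (map lam (wedges w p)).
  by rewrite all_map; apply/allP => e /in_label; rewrite inE => /andP[].
rewrite /twalk_after /wedges pairmap_cat last_cat last_p.
by split; rewrite ?all_cat ?X_p ?map_cat ?path_leq_const_cat.
Qed.

End Walks.

Lemma spanner_beta_ge0 (R : realFieldType) (alpha beta : R) (V : finType)
    (E H : {set {set V}}) (v : V) :
  spanner alpha beta E H -> (0 <= beta)%R.
Proof.
move=> [_ /(_ v v [::] (conj erefl erefl)) [s' [_]]].
by rewrite mulr0 add0r; apply: le_trans.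
Qed.

Lemma exists_union_bounded (R : realFieldType) (T : finType) (D : {set T})
    (P : nat -> {set T} -> Prop) (B : R) :
  (forall i A, P i A -> A \subset D) ->
  (forall i, exists2 A, P i A & (#|A|%:R <= B)%R) ->
  forall l : seq nat, exists2 H : {set T}, H \subset D /\ (#|H|%:R <= (size l)%:R * B)%R &
    forall i, i \in l -> exists2 A, P i A & A \subset H.
Proof.
move=> sPD exP; elim=> [|i l [H [sHD card_H] P_l]].
  by exists set0; rewrite ?sub0set ?cards0 ?mul0r.
have [A P_A card_A] := exP i.
exists (A :|: H).
  split; first by rewrite subUset sHD (sPD i).
  have card_AH : (#|A :|: H|%:R <= #|A|%:R + #|H|%:R :> R)%R.
    by rewrite -natrD ler_nat leq_card_setU.
  rewrite /= -addn1 natrD mulrDl mul1r; lra.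
move=> j; rewrite inE => /predU1P[-> | /P_l[A' P_A' sA'H]].
  by exists A; rewrite ?subsetUl.
by exists A'; rewrite // (subset_trans sA'H) ?subsetUr.
Qed.

Section LabelSpanners.
Variables (R : realFieldType) (alpha beta : R) (V : finType).
Variables (E H : {set {set V}}) (lam : {set V} -> nat).
Hypothesis beta_ge0 : (0 <= beta)%R.
Hypothesis label_spanners : forall k, k \in labels E lam ->
  exists2 Hk : {set {set V}}, spanner alpha beta (label_edges E lam k) Hk & Hk \subset H.

Let later (k : nat) := count (fun i => k < i) (labels E lam).

Lemma label_walk_spanned k w u p : k \in labels E lam ->
  walk (label_edges E lam k) w u p ->
  exists2 p', walk (label_edges H lam k) w u p' &
    ((size p')%:R <= alpha * (size p)%:R + beta)%R.
Proof.
move=> k_labels walk_p.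
have [Hk [sHkE span_Hk] sHkH] := label_spanners k_labels.
have [p' [walk_p' size_p']] := span_Hk _ _ _ walk_p.
exists p' => //; apply: sub_walk walk_p'; apply/subsetP => e e_Hk.
have := subsetP sHkE e e_Hk; rewrite !inE => /andP[_ ->].
by rewrite (subsetP sHkH).
Qed.

(* [p] is the current segment of label [k], still to be replaced; every later
   segment has a larger label, so at most [later k] of them remain. *)
Lemma twalk_after_spanned s : forall k w u v p,
  k \in labels E lam -> walk (label_edges E lam k) w u p ->
  twalk_after E lam k u v s ->
  exists2 s', twalk_after H lam k w v s' &
    ((size s')%:R <= alpha * (size p + size s)%:R + (later k).+1%:R * beta)%R.
Proof.
elim: s => [|x s IH] k w u v p k_labels walk_p.
  move=> [_ _ /= <-].
  have [p' walk_p' size_p'] := label_walk_spanned k_labels walk_p.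
  exists p'; first by rewrite -[p']cats0; apply: label_walk_cat walk_p' _; split.
  have : (beta <= (later k).+1%:R * beta)%R.
    by rewrite -[X in (X <= _)%R]mul1r ler_wpM2r // ler1n.
  rewrite addn0; lra.
move=> /twalk_after_cons[E_ux le_kj walk_s].
set j := lam [set u; x] in le_kj walk_s.
have j_labels : j \in labels E lam by apply: mem_labels.
case: (ltngtP k j) le_kj => // [lt_kj | eq_kj] _.
- have [p' walk_p' size_p'] := label_walk_spanned k_labels walk_p.
  have walk_x : walk (label_edges E lam j) u x [:: x].
    by split; rewrite //= andbT /adj inE E_ux /=.
  have [s'' walk_s'' size_s''] := IH _ _ _ _ _ j_labels walk_x walk_s.
  exists (p' ++ s'').
    exact: label_walk_cat walk_p' (twalk_afterW (ltnW lt_kj) walk_s'').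
  have : ((later j).+1%:R * beta + beta <= (later k).+1%:R * beta)%R.
    rewrite -[X in (_ + X <= _)%R]mul1r -mulrDl natr1 ler_wpM2r //.
    by rewrite ler_nat ltnS count_gt_succ ?labels_uniq.
  move: size_s''; rewrite size_cat -[size (x :: s)]/(size [:: x] + size s).
  rewrite !natrD !mulrDr; lra.
- have walk_px : walk (label_edges E lam k) w x (rcons p x).
    by apply: walk_rcons walk_p _; rewrite inE E_ux eq_kj eqxx.
  rewrite -eq_kj in walk_s.
  have [s' walk_s' size_s'] := IH _ _ _ _ _ k_labels walk_px walk_s.
  by exists s'; rewrite // size_rcons addSnnS in size_s'.
Qed.

Lemma tspanner_of_label_spanners :
  H \subset E -> tspanner alpha ((size (labels E lam))%:R * beta) E lam H.
Proof.
move=> sHE; split=> // u v [|x s] twalk_s.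
  exists [::]; split; first by case: twalk_s => _ [_ <-].
  by rewrite mulr0 add0r mulr_ge0.
have /twalk_after_first walk_s := twalk_s.
have j_labels : lam [set u; x] \in labels E lam.
  by case: twalk_s => /andP[E_ux _] _; apply: mem_labels.
have [s' /twalk_after_twalk walk_s' size_s'] :=
  twalk_after_spanned (p := [::]) j_labels (conj erefl erefl) walk_s.
exists s'; split=> //; apply: (le_trans size_s'); rewrite add0n lerD2l.
by rewrite ler_wpM2r // ler_nat count_gt_lt_size.
Qed.

End LabelSpanners.

Theorem theorem22 (R : realFieldType) (alpha beta : R) (f : nat -> R) :
  (* algorithm A: every static graph on n' vertices has an (alpha,beta)-spanner
     of size O(f n') *)
  (exists (C : R) (N0 : nat),
     forall (V : finType) (E : {set {set V}}),
       is_graph E -> (N0 <= #|V|)%N ->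
       exists H : {set {set V}},
         spanner alpha beta E H /\ (#|H|%:R <= C * f #|V|)%R) ->
  (* every temporal graph on n vertices with lifetime L has a temporal
     (alpha, L beta)-spanner of size O(L f n) *)
  exists (C' : R) (N1 : nat),
    forall (V : finType) (E : {set {set V}}) (lam : {set V} -> nat),
      is_graph E -> (forall e, e \in E -> (0 < lam e)%N) -> (N1 <= #|V|)%N ->
      exists H : {set {set V}},
        tspanner alpha ((lifetime E lam)%:R * beta)%R E lam H /\
        (#|H|%:R <= C' * ((lifetime E lam)%:R * f #|V|))%R.
Proof.
move=> [C [N0 static_spanners]].
have beta_ge0 : (0 <= beta)%R.
  have graph0 : is_graph (set0 : {set {set 'I_N0.+1}}) by move=> e; rewrite inE.
  have large0 : (N0 <= #|'I_N0.+1|)%N by rewrite card_ord.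
  have [H0 [span_H0 _]] := static_spanners _ _ graph0 large0.
  exact: spanner_beta_ge0 ord0 span_H0.
exists C, N0 => V E lam graph_E _ large_V.
pose P k Hk := spanner alpha beta (label_edges E lam k) Hk.
have sPE k Hk : P k Hk -> Hk \subset E.
  by move=> [sHk _]; apply: subset_trans sHk (label_edges_sub _ _ _).
have label_spanner k : exists2 Hk, P k Hk & (#|Hk|%:R <= C * f #|V|)%R.
  have [|Hk []] := static_spanners _ (label_edges E lam k) _ large_V.
    by move=> e /(subsetP (label_edges_sub _ _ _)) /graph_E.
  by exists Hk.
have [H [sHE card_H] label_spanners] :=
  exists_union_bounded sPE label_spanner (labels E lam).
exists H; split; last by rewrite /lifetime mulrCA.
exact: tspanner_of_label_spanners.
Qed.
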